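(* Let $L$ be a $\mathbb{Z}$-lattice, $A,s$ positive integers and $w\in R(A,L)$. Define $\mathfrak{S}_{w,s}(L)=\{(\alpha,\beta)\in(\mathbb{Z}/s\mathbb{Z})^2: L\prec_{A,(\alpha,\beta),s}w\}$, for every $K\in\mathrm{gen}(L)$ with $K\not\cong L$ define $\mathfrak{S}_{L,s}(K)=\{(\alpha,\beta)\in(\mathbb{Z}/s\mathbb{Z})^2: K\prec_{A,(\alpha,\beta),s}L\}$, and let $\mathfrak{S}_s=\mathfrak{S}_{w,s}(L)\cap\bigcap_{K}\mathfrak{S}_{L,s}(K)$, the intersection over all $K\in\mathrm{gen}(L)$ not isometric to $L$. Let $(\alpha,\beta)\in\mathfrak{S}_s$ and let $\ell=\mathbb{Z}v_1+\mathbb{Z}v_2=[A,b,a]$ with $(a,b)\equiv(\alpha,\beta)\pmod s$ and $Aa-b^2>0$. If $\ell$ is represented by some lattice in $\mathrm{gen}(L)$, then there exists a representation $\sigma:\ell\to L$ with $\sigma(v_1)=w$.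
   Context: All $\mathbb{Z}$-lattices are free $\mathbb{Z}$-modules of finite rank with a positive definite, integral symmetric bilinear form $B$; $Q(v)=B(v,v)$. A representation is a $B$-preserving linear map; $\cong$ means isometric. $[A,b,a]$ is the binary lattice $\mathbb{Z}v_1+\mathbb{Z}v_2$ with $Q(v_1)=A$, $B(v_1,v_2)=b$, $Q(v_2)=a$. $\mathrm{gen}(L)$ is the set of lattices on $V=\mathbb{Q}L$ locally isometric to $L$ at every prime. $R(A,K)=\{v\in K:Q(v)=A\}$. For lattices $K,L$ on $V$, $v\in R(A,K)$: $R_v(K,\alpha,\beta,s)=\{u\in K/sK:Q(u)\equiv\alpha,\ B(u,v)\equiv\beta\pmod s\}$; $R_v(K,L,s)=\{\tau\in O(V):\tau(sK)\subseteq L,\ \tau(v)\in L\}$; $K\prec_{A,(\alpha,\beta),s}L$ means: for every $v\in R(A,K)$ and every coset $u\in R_v(K,\alpha,\beta,s)$ there is $\tau\in R_v(K,L,s)$ with $\tau(\tilde u)\in L$ for all $\tilde u\in u$. For $v,w\in R(A,L)$: $R_{v,w}(L,s)=\{\tau\in R_v(L,L,s):\tau(v)=w\}$; $L\prec_{A,(\alpha,\beta),s}w$ means: for every $v\in R(A,L)$ and every coset $u\in R_v(L,\alpha,\beta,s)$ there is $\tau\in R_{v,w}(L,s)$ with $\tau(\tilde u)\in L$ for all $\tilde u\in u$. *)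

(* The quadratic space V = Q L is modelled as 'rV[rat]_n with
   the bilinear form B(u,v) = u G v^T (G symmetric, positive definite).
   A lattice on V is given by a basis matrix M (rows = Z-basis), M invertible.
   Isometries act on row vectors on the right: tau(v) = v *m tau. *)
From mathcomp Require Import all_boot all_order all_algebra.
Set Implicit Arguments. Unset Strict Implicit. Unset Printing Implicit Defensive.
Import Order.TTheory GRing.Theory Num.Theory.
Local Open Scope ring_scope.

Definition bil (n : nat) (G : 'M[rat]_n) (u v : 'rV[rat]_n) : rat :=
  (u *m G *m v^T) 0 0.

Definition posdef (n : nat) (G : 'M[rat]_n) : Prop :=
  forall v : 'rV[rat]_n, v != 0 -> 0 < bil G v v.

Definition inLat (n : nat) (M : 'M[rat]_n) (v : 'rV[rat]_n) : Prop :=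
  exists x : 'rV[int]_n, v = map_mx (fun z : int => z%:~R) x *m M.

Definition is_lattice (n : nat) (G M : 'M[rat]_n) : Prop :=
  M \in unitmx /\
  (forall u v, inLat M u -> inLat M v -> exists z : int, bil G u v = z%:~R).

Definition orth (n : nat) (G t : 'M[rat]_n) : Prop :=
  t \in unitmx /\ t *m G *m t^T = G.

Definition congr (s alpha : int) (x : rat) : Prop :=
  exists k : int, x = (alpha + s * k)%:~R.

Definition Rset (n : nat) (G M : 'M[rat]_n) (A : int) (v : 'rV[rat]_n) : Prop :=
  inLat M v /\ bil G v v = A%:~R.

(* K <_{A,(alpha,beta),s} L.  A coset u of K/sK in R_v(K,alpha,beta,s) is given
   by any representative u0 in K; its elements are u0 + s k, k in K. *)
Definition prec_lat (n : nat) (G MK ML : 'M[rat]_n) (A alpha beta s : int) : Prop :=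
  forall v, Rset G MK A v ->
  forall u, inLat MK u -> congr s alpha (bil G u u) -> congr s beta (bil G u v) ->
  exists t, [/\ orth G t,
     (forall y, inLat MK y -> inLat ML ((s%:~R *: y) *m t)),
     inLat ML (v *m t) &
     (forall k, inLat MK k -> inLat ML ((u + s%:~R *: k) *m t))].

Definition prec_w (n : nat) (G ML : 'M[rat]_n) (A alpha beta s : int)
    (w : 'rV[rat]_n) : Prop :=
  forall v, Rset G ML A v ->
  forall u, inLat ML u -> congr s alpha (bil G u u) -> congr s beta (bil G u v) ->
  exists t, [/\ orth G t,
     (forall y, inLat ML y -> inLat ML ((s%:~R *: y) *m t)),
     inLat ML (v *m t), v *m t = w &
     (forall k, inLat ML k -> inLat ML ((u + s%:~R *: k) *m t))].

Definition loc (n : nat) (p : nat) (M : 'M[rat]_n) (v : 'rV[rat]_n) : Prop :=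
  exists d : nat, ~~ (p %| d)%N /\ inLat M (d%:R *: v).

Definition in_gen (n : nat) (G ML MK : 'M[rat]_n) : Prop :=
  is_lattice G MK /\
  forall p : nat, prime p ->
    exists t, orth G t /\ forall v, loc p ML v <-> loc p MK (v *m t).

Definition iso (n : nat) (G MK ML : 'M[rat]_n) : Prop :=
  exists t, orth G t /\ forall v, inLat MK v <-> inLat ML (v *m t).

(* the representation [A,b,a] -> K sending v1 |-> x1, v2 |-> x2
   (a B-preserving linear map is determined by the images of v1, v2) *)
Definition reps_binary (n : nat) (G M : 'M[rat]_n) (A b a : int)
    (x1 x2 : 'rV[rat]_n) : Prop :=
  [/\ inLat M x1, inLat M x2, bil G x1 x1 = A%:~R, bil G x1 x2 = b%:~R
    & bil G x2 x2 = a%:~R].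

(** Let [K] in the genus of [L] represent [[A,b,a]] by [v1 |-> x1, v2 |-> x2].
    If [K] is isometric to [L], the isometry carries the representation into [L];
    otherwise [K <_{A,(alpha,beta),s} L] applied to [x1] and the coset of [x2]
    (which contains [x2] itself) gives an isometry of [V] carrying both into [L].
    In either case [L] represents [[A,b,a]] by some [v1 |-> v, v2 |-> u], and
    [L <_{A,(alpha,beta),s} w] applied to [v] and the coset of [u] gives an
    isometry sending [v] to [w] and [u] into [L]. No positivity or
    integrality hypothesis is needed for this. *)
From mathcomp Require Import all_boot all_order all_algebra.
From Stdlib Require Import Classical.
From mathcomp Require Import ring.
Import Order.TTheory GRing.Theory Num.Theory.
Local Open Scope ring_scope.
Set Implicit Arguments.

Lemma bil_orth n (G t : 'M[rat]_n) u v :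
  orth G t -> bil G (u *m t) (v *m t) = bil G u v.
Proof. by case=> _ tGt; rewrite /bil trmx_mul -{2}tGt !mulmxA. Qed.

Lemma bilC n (G : 'M[rat]_n) u v : G^T = G -> bil G u v = bil G v u.
Proof.
move=> GT; have uGv : (u *m G *m v^T)^T = v *m G *m u^T.
  by rewrite !trmx_mul trmxK GT mulmxA.
by rewrite /bil -uGv [RHS]mxE.
Qed.

Lemma inLat0 n (M : 'M[rat]_n) : inLat M 0.
Proof.
exists 0; have -> : map_mx (fun z : int => z%:~R) (0 : 'rV[int]_n) = (0 : 'rV[rat]_n).
  by apply/matrixP => i j; rewrite !mxE.
by rewrite mul0mx.
Qed.

Lemma congr_modz (s alpha a : int) :
  (a = alpha %[mod s])%Z -> congr s alpha a%:~R.
Proof.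
move=> a_alpha; exists ((a %/ s)%Z - (alpha %/ s)%Z); congr (_%:~R).
have := intdiv.divz_eq a s; have := intdiv.divz_eq alpha s.
rewrite a_alpha => {2}-> {1}->; ring.
Qed.

Lemma inLat_coset_rep n (MK ML t : 'M[rat]_n) (s : rat) u :
  (forall k, inLat MK k -> inLat ML ((u + s *: k) *m t)) -> inLat ML (u *m t).
Proof. by move=> /(_ 0 (inLat0 _)); rewrite scaler0 addr0. Qed.

Lemma reps_binary_orth n (G MK ML t : 'M[rat]_n) (A b a : int) x1 x2 :
  orth G t -> reps_binary G MK A b a x1 x2 ->
  inLat ML (x1 *m t) -> inLat ML (x2 *m t) ->
  reps_binary G ML A b a (x1 *m t) (x2 *m t).
Proof. by move=> tO [_ _ x11 x12 x22] Lx1 Lx2; split; rewrite ?bil_orth. Qed.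

Section Transport.

Variables (n : nat) (G : 'M[rat]_n) (A s alpha beta a b : int).
Hypotheses (GT : G^T = G) (a_alpha : (a = alpha %[mod s])%Z)
  (b_beta : (b = beta %[mod s])%Z).

Lemma iso_reps_binary (MK ML : 'M[rat]_n) x1 x2 :
  iso G MK ML -> reps_binary G MK A b a x1 x2 ->
  exists y1 y2, reps_binary G ML A b a y1 y2.
Proof.
move=> [t [tO KL]] rK; exists (x1 *m t), (x2 *m t).
by case: (rK) => Kx1 Kx2 *; apply: reps_binary_orth tO rK _ _; apply/KL.
Qed.

Lemma prec_lat_reps_binary (MK ML : 'M[rat]_n) x1 x2 :
  prec_lat G MK ML A alpha beta s -> reps_binary G MK A b a x1 x2 ->
  exists y1 y2, reps_binary G ML A b a y1 y2.
Proof.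
move=> KL rK; case: (rK) => Kx1 Kx2 x11 x12 x22.
have [||t [tO _ Lx1 Lx2]] := KL x1 (conj Kx1 x11) x2 Kx2.
- by rewrite x22; apply: congr_modz.
- by rewrite bilC // x12; apply: congr_modz.
exists (x1 *m t), (x2 *m t).
exact: reps_binary_orth tO rK Lx1 (inLat_coset_rep Lx2).
Qed.

Lemma prec_w_reps_binary (ML : 'M[rat]_n) w v u :
  prec_w G ML A alpha beta s w -> inLat ML w -> reps_binary G ML A b a v u ->
  exists y2, reps_binary G ML A b a w y2.
Proof.
move=> Lprec Lw rL; case: (rL) => Lv Lu vv vu uu.
have [||t [tO _ _ vtw Lut]] := Lprec v (conj Lv vv) u Lu.
- by rewrite uu; apply: congr_modz.
- by rewrite bilC // vu; apply: congr_modz.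
exists (u *m t); rewrite -vtw.
by apply: reps_binary_orth tO rL _ (inLat_coset_rep Lut); rewrite vtw.
Qed.

End Transport.

Theorem corollary2p4 (n : nat) (G ML : 'M[rat]_n) (A s : int) (w : 'rV[rat]_n)
    (alpha beta a b : int) :
  G^T = G -> posdef G -> is_lattice G ML ->
  0 < A -> 0 < s -> Rset G ML A w ->
  (* (alpha, beta) in S_s *)
  prec_w G ML A alpha beta s w ->
  (forall MK : 'M[rat]_n, in_gen G ML MK -> ~ iso G MK ML ->
     prec_lat G MK ML A alpha beta s) ->
  (a = alpha %[mod s])%Z -> (b = beta %[mod s])%Z -> 0 < A * a - b ^+ 2 ->
  (exists (MK : 'M[rat]_n) (x1 x2 : 'rV[rat]_n),
      in_gen G ML MK /\ reps_binary G MK A b a x1 x2) ->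
  exists y2 : 'rV[rat]_n, reps_binary G ML A b a w y2.
Proof.
move=> GT _ _ _ _ [Lw _] Lprec Kprec a_alpha b_beta _ [MK [x1 [x2 [genK rK]]]].
have [y1 [y2 rL]] : exists y1 y2, reps_binary G ML A b a y1 y2.
  have [isoK | nisoK] := classic (iso G MK ML).
  - exact: iso_reps_binary isoK rK.
  - exact: prec_lat_reps_binary (Kprec MK genK nisoK) rK.
exact: prec_w_reps_binary Lprec Lw rL.
Qed.
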